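(* Let $S\subseteq(0,\infty)$ contain more than one point and let $T$ be a closed subset of $(0,\infty)$ with $\varnothing\ne T\ne(0,\infty)$. If $S$ divides $T$, then there exist $a>1$ and $B\subseteq[1,a)$ such that $T=a^{\mathbb{Z}}B:=\{a^kb:k\in\mathbb{Z},\ b\in B\}$ and $a\le s'/s$ for all $s<s'$ in $S$.
   Context: For $S,T_1,T_2\subseteq(0,\infty)$, $S$ links $T_1$ and $T_2$ if there is $c>0$ with $cS\cap T_1\ne\varnothing$ and $cS\cap T_2\ne\varnothing$, where $cS=\{cs:s\in S\}$. $S$ divides $T$ (written $S\mid T$) if $S$ does not link $T$ and $T^C:=(0,\infty)\setminus T$. *)

From Stdlib Require Import Reals.
Open Scope R_scope.

Definition scale (c : R) (S : R -> Prop) : R -> Prop :=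
  fun x => exists s, S s /\ x = c * s.

Definition links (S T1 T2 : R -> Prop) : Prop :=
  exists c, 0 < c /\ (exists x, scale c S x /\ T1 x) /\ (exists y, scale c S y /\ T2 y).

Definition complPos (T : R -> Prop) : R -> Prop := fun x => 0 < x /\ ~ T x.

Definition divides (S T : R -> Prop) : Prop := ~ links S T (complPos T).

Definition closed_in_pos (T : R -> Prop) : Prop :=
  (forall x, T x -> 0 < x) /\
  (forall x, 0 < x ->
     (forall eps, 0 < eps -> exists t, T t /\ Rabs (t - x) < eps) -> T x).

Definition zpow_set (a : R) (B : R -> Prop) : R -> Prop :=
  fun x => exists (k : Z) b, B b /\ x = powerRZ a k * b.

(* The ratios s'/s of points of S lie in the group of factors h > 0 with hT = T: otherwise some
   c S would meet both T and its complement. This group is closed because T is, so its least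
   element a beyond 1 exists and belongs to it, unless the group accumulates at 1; in that case
   T, being closed and nonempty, would be all of (0,oo). Cutting T along the powers of a gives
   T = a^Z (T ∩ [1,a)), and a <= s'/s by minimality. *)
From Stdlib Require Import Reals Lra Classical.
Open Scope R_scope.

Lemma powerRZ_floor (h y : R) : 1 < h -> 0 < y ->
  exists k : Z, powerRZ h k <= y < powerRZ h k * h.
Proof.
  intros Hh Hy.
  assert (Hl : 0 < ln h) by (rewrite <- ln_1; apply ln_increasing; lra).
  set (r := ln y / ln h).
  assert (Hr : r * ln h = ln y) by (unfold r; field; lra).
  destruct (archimed r) as [A1 A2].
  exists (up r - 1)%Z.
  rewrite <- (Rpower_1 h) at 3 by lra.
  rewrite !powerRZ_Rpower, <- Rpower_plus by lra.
  unfold Rpower; rewrite minus_IZR, <- (exp_ln y) by lra.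
  rewrite <- Hr; split.
  - destruct (Req_dec (IZR (up r) - 1) r) as [E|E].
    + rewrite E; lra.
    + left; apply exp_increasing, Rmult_lt_compat_r; lra.
  - apply exp_increasing, Rmult_lt_compat_r; lra.
Qed.

Lemma inf_exists (E : R -> Prop) (lb : R) :
  (forall y, E y -> lb <= y) -> (exists y, E y) ->
  exists m, (forall y, E y -> m <= y) /\ (forall b, m < b -> exists y, E y /\ y < b).
Proof.
  intros Hlb [y0 Ey0].
  destruct (completeness (fun z => E (- z))) as [M [Mub Mlub]].
  - exists (- lb); intros z Ez; specialize (Hlb _ Ez); lra.
  - exists (- y0); rewrite Ropp_involutive; exact Ey0.
  - exists (- M); split.
    + intros y Ey; enough (- y <= M) by lra.
      apply Mub; rewrite Ropp_involutive; exact Ey.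
    + intros b Mb; apply NNPP; intro Hno.
      enough (M <= - b) by lra.
      apply Mlub; intros z Ez; apply Rnot_lt_le; intro zb.
      apply Hno; exists (- z); split; [exact Ez | lra].
Qed.

Lemma closed_in_pos_continuous (T : R -> Prop) (f : R -> R) (h : R) :
  closed_in_pos T -> continuity_pt f h -> 0 < f h ->
  (forall d, 0 < d -> exists g, Rabs (g - h) < d /\ T (f g)) -> T (f h).
Proof.
  intros [_ Tcl] Hf Hfh Happ.
  apply Tcl; [exact Hfh|]; intros eps Heps.
  destruct (Hf eps Heps) as [d [Hd Hfd]].
  destruct (Happ d Hd) as [g [Hgh Tg]].
  exists (f g); split; [exact Tg|].
  destruct (Req_dec h g) as [<- | Hhg].
  - rewrite Rminus_diag, Rabs_R0; exact Heps.
  - apply (Hfd g); split; [split; [exact I | exact Hhg] | exact Hgh].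
Qed.

Section ScaleInvariance.

Variable T : R -> Prop.

Definition scale_invariant (h : R) : Prop :=
  0 < h /\ forall x, 0 < x -> (T x <-> T (h * x)).

Lemma scale_invariant_1 : scale_invariant 1.
Proof. split; [lra|]; intros x _; rewrite Rmult_1_l; tauto. Qed.

Lemma scale_invariantM (h g : R) :
  scale_invariant h -> scale_invariant g -> scale_invariant (h * g).
Proof.
  intros [Hh HhT] [Hg HgT]; split; [nra|]; intros x Hx.
  rewrite (HgT x Hx), (HhT (g * x)) by nra; rewrite Rmult_assoc; tauto.
Qed.

Lemma scale_invariantV (h : R) : scale_invariant h -> scale_invariant (/ h).
Proof.
  intros [Hh HhT]; split; [apply Rinv_0_lt_compat; exact Hh|]; intros x Hx.
  assert (Hx' : 0 < / h * x) by (apply Rmult_lt_0_compat; [apply Rinv_0_lt_compat|]; lra).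
  rewrite (HhT _ Hx'); replace (h * (/ h * x)) with x by (field; lra); tauto.
Qed.

Lemma scale_invariant_pow (h : R) (n : nat) : scale_invariant h -> scale_invariant (h ^ n).
Proof.
  intros Hh; induction n as [|n IH]; simpl.
  - exact scale_invariant_1.
  - exact (scale_invariantM _ _ Hh IH).
Qed.

Lemma scale_invariant_powerRZ (h : R) (k : Z) :
  scale_invariant h -> scale_invariant (powerRZ h k).
Proof.
  intros Hh; destruct k as [|p|p]; simpl.
  - exact scale_invariant_1.
  - exact (scale_invariant_pow _ _ Hh).
  - exact (scale_invariantV _ (scale_invariant_pow _ _ Hh)).
Qed.

Hypothesis T_closed : closed_in_pos T.

Lemma scale_invariant_closed (h : R) : 0 < h ->
  (forall eps, 0 < eps -> exists g, scale_invariant g /\ Rabs (g - h) < eps) ->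
  scale_invariant h.
Proof.
  intros Hh Happ; split; [exact Hh|]; intros x Hx; split; intros Tx.
  - apply (closed_in_pos_continuous T (fun g => g * x)); [exact T_closed | reg | nra |].
    intros d Hd; destruct (Happ d Hd) as [g [[_ HgT] Hgh]].
    exists g; split; [exact Hgh | apply (HgT x Hx), Tx].
  - replace x with ((fun g => h * x / g) h) by (simpl; field; lra).
    apply (closed_in_pos_continuous T); [exact T_closed | reg; lra | |].
    { simpl; apply Rdiv_lt_0_compat; nra. }
    intros d Hd; destruct (Happ (Rmin d h) (Rmin_pos _ _ Hd Hh)) as [g [[Hg HgT] Hgh]].
    exists g; split; [eapply Rlt_le_trans; [exact Hgh | apply Rmin_l]|].
    apply HgT; [apply Rdiv_lt_0_compat; nra|].
    replace (g * (h * x / g)) with (h * x) by (field; lra); exact Tx.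
Qed.

(* Between two consecutive images h^k t0 <= x < h^(k+1) t0 of a point t0 of T, the gap to x is
   below (h - 1) x. *)
Lemma scale_invariant_dense_full (t0 : R) : T t0 ->
  (forall b, 1 < b -> exists h, scale_invariant h /\ 1 < h < b) ->
  forall x, 0 < x -> T x.
Proof.
  destruct T_closed as [Tpos Tcl]; intros Tt0 Hdense x Hx.
  pose proof (Tpos t0 Tt0) as Ht0.
  apply Tcl; [exact Hx|]; intros eps Heps.
  assert (Hex : 0 < eps / x) by (apply Rdiv_lt_0_compat; lra).
  destruct (Hdense (1 + eps / x)) as [h [[Hh HhT] [Hh1 Hhb]]]; [lra|].
  destruct (powerRZ_floor h (x / t0) Hh1) as [k [Hk1 Hk2]]; [apply Rdiv_lt_0_compat; lra|].
  destruct (scale_invariant_powerRZ h k (conj Hh HhT)) as [Hhk HhkT].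
  exists (powerRZ h k * t0); split; [apply (HhkT t0 Ht0), Tt0|].
  apply (Rmult_le_compat_r t0) in Hk1; [|lra].
  apply (Rmult_lt_compat_r t0) in Hk2; [|lra].
  replace (x / t0 * t0) with x in * by (field; lra).
  assert (Hgap : x * (h - 1) < eps).
  { apply (Rmult_lt_compat_l x) in Hhb; [|exact Hx].
    replace (x * (1 + eps / x)) with (x + eps) in Hhb by (field; lra); nra. }
  rewrite Rabs_left1 by lra; nra.
Qed.

Lemma zpow_set_fundamental_domain (a : R) : 1 < a -> scale_invariant a ->
  forall x, T x <-> zpow_set a (fun b => T b /\ 1 <= b < a) x.
Proof.
  destruct T_closed as [Tpos _]; intros Ha Hainv x; split.
  - intros Tx; pose proof (Tpos x Tx) as Hx.
    destruct (powerRZ_floor a x Ha Hx) as [k [Hk1 Hk2]].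
    destruct (scale_invariant_powerRZ a k Hainv) as [Hak HakT].
    assert (Hb : 0 < x / powerRZ a k) by (apply Rdiv_lt_0_compat; lra).
    exists k, (x / powerRZ a k); split; [|field; lra].
    split; [|split].
    + apply (HakT _ Hb).
      replace (powerRZ a k * (x / powerRZ a k)) with x by (field; lra); exact Tx.
    + apply (Rmult_le_reg_r (powerRZ a k)); [exact Hak|].
      replace (x / powerRZ a k * powerRZ a k) with x by (field; lra); lra.
    + apply (Rmult_lt_reg_r (powerRZ a k)); [exact Hak|].
      replace (x / powerRZ a k * powerRZ a k) with x by (field; lra); lra.
  - intros [k [b [[Tb _] ->]]].
    destruct (scale_invariant_powerRZ a k Hainv) as [_ HakT].
    exact (proj1 (HakT b (Tpos b Tb)) Tb).
Qed.

End ScaleInvariance.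

Lemma divides_ratio_invariant (S T : R -> Prop) (u v : R) :
  (forall s, S s -> 0 < s) -> divides S T -> S u -> S v -> scale_invariant T (v / u).
Proof.
  intros Spos Hdiv Su Sv; pose proof (Spos u Su); pose proof (Spos v Sv).
  assert (Hnolink : forall c w w', 0 < c -> S w -> S w' -> T (c * w) -> T (c * w')).
  { intros c w w' Hc Sw Sw' Tw; apply NNPP; intro nTw'; apply Hdiv.
    exists c; split; [exact Hc|]; split.
    - exists (c * w); split; [exists w; split; [exact Sw | reflexivity] | exact Tw].
    - exists (c * w'); split; [exists w'; split; [exact Sw' | reflexivity]|].
      split; [pose proof (Spos w' Sw'); nra | exact nTw']. }
  split; [apply Rdiv_lt_0_compat; lra|]; intros x Hx.
  assert (Hc : 0 < x / u) by (apply Rdiv_lt_0_compat; lra).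
  replace (v / u * x) with (x / u * v) by (field; lra).
  pattern x at 1; replace x with (x / u * u) by (field; lra).
  split; apply Hnolink; assumption.
Qed.

Lemma ratio_gt_1 (s s' : R) : 0 < s -> s < s' -> 1 < s' / s.
Proof.
  intros Hs Hss'; apply (Rmult_lt_reg_r s); [exact Hs|].
  unfold Rdiv; rewrite Rmult_assoc, Rinv_l; lra.
Qed.

Theorem proposition6p3 (S T : R -> Prop) :
  (forall s, S s -> 0 < s) ->
  (exists s1 s2, S s1 /\ S s2 /\ s1 <> s2) ->
  closed_in_pos T ->
  (exists t, T t) ->
  (exists x, 0 < x /\ ~ T x) ->
  divides S T ->
  exists a (B : R -> Prop),
    1 < a /\
    (forall b, B b -> 1 <= b < a) /\
    (forall x, T x <-> zpow_set a B x) /\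
    (forall s s', S s -> S s' -> s < s' -> a <= s' / s).
Proof.
  intros Spos [s1 [s2 [S1 [S2 S12]]]] Tcl [t0 Tt0] [x0 [Hx0 nTx0]] Hdiv.
  set (E := fun h => scale_invariant T h /\ 1 < h).
  assert (HE : forall s s', S s -> S s' -> s < s' -> E (s' / s)).
  { intros s s' Ss Ss' Hss'; split; [apply (divides_ratio_invariant S); assumption|].
    apply ratio_gt_1; [apply Spos|]; assumption. }
  destruct (inf_exists E 1) as [a [Ha_lb Ha_approx]].
  { intros h [_ Hh]; lra. }
  { destruct (Rtotal_order s1 s2) as [H12 | [H12 | H12]]; [| contradiction |].
    - exists (s2 / s1); apply HE; assumption.
    - exists (s1 / s2); apply HE; assumption. }
  assert (Ha1 : 1 < a).
  { apply Rnot_le_lt; intros Ha1; apply nTx0.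
    apply (scale_invariant_dense_full T Tcl t0 Tt0); [|exact Hx0].
    intros b Hb; destruct (Ha_approx b) as [h [[Hh Hh1] Hhb]]; [lra|].
    exists h; split; [exact Hh | lra]. }
  assert (Hainv : scale_invariant T a).
  { apply scale_invariant_closed; [exact Tcl | lra|]; intros eps Heps.
    destruct (Ha_approx (a + eps)) as [h [[Hh Hh1] Hheps]]; [lra|].
    pose proof (Ha_lb h (conj Hh Hh1)).
    exists h; split; [exact Hh | rewrite Rabs_right; lra]. }
  exists a, (fun b => T b /\ 1 <= b < a); split; [exact Ha1|]; split; [|split].
  - intros b [_ Hb]; exact Hb.
  - apply zpow_set_fundamental_domain; assumption.
  - intros s s' Ss Ss' Hss'; apply Ha_lb, HE; assumption.
Qed.
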